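(* Let $p,q\geq1$ be integers and $\alpha_0=\arctan\sqrt{q/p}$. Consider the differential system $$\dot\vartheta=3\sin\vartheta\cos\vartheta\sin(\alpha-\vartheta),\qquad \dot\alpha=q\cos\alpha\cos\vartheta-p\sin\alpha\sin\vartheta$$ on the region $R=R_1\cup R_2$, where $R_1=\{(\vartheta,\alpha):0\leq\vartheta\leq\pi/2,\ \vartheta-\pi/2\leq\alpha\leq\vartheta+\pi/2\}$ and $R_2=\{(\vartheta,\alpha):0\leq\vartheta\leq\pi/2,\ \vartheta+\pi/2\leq\alpha\leq\vartheta+3\pi/2\}$. Its stationary points in $R$ are $$P_0=(\alpha_0,\alpha_0),\ P_1=(\alpha_0,\alpha_0+\pi),\ Q_1=(0,\pi/2),\ Q_2=(0,3\pi/2),\ Q_3=(\pi/2,0),\ Q_4=(\pi/2,\pi).$$ Moreover, $P_0$ is a spiral sink if $p+q\leq17$, while it is a nodal sink if $p+q\geq18$; $P_1$ is a spiral source if $p+q\leq17$, while it is a nodal source if $p+q\geq18$. All the other stationary points are saddle points. *)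

From Stdlib Require Import Reals ZArith List.
From Coquelicot Require Import Coquelicot.
Open Scope R_scope.

Definition theta_dot (p q : R) (th al : R) : R :=
  3 * sin th * cos th * sin (al - th).
Definition alpha_dot (p q : R) (th al : R) : R :=
  q * cos al * cos th - p * sin al * sin th.

Definition inR1 (th al : R) : Prop :=
  0 <= th <= PI / 2 /\ th - PI / 2 <= al <= th + PI / 2.
Definition inR2 (th al : R) : Prop :=
  0 <= th <= PI / 2 /\ th + PI / 2 <= al <= th + 3 * PI / 2.
Definition inR (th al : R) : Prop := inR1 th al \/ inR2 th al.

Definition stationary (p q th al : R) : Prop :=
  theta_dot p q th al = 0 /\ alpha_dot p q th al = 0.

(* 2x2 real matrices ((a, b), (c, d)) = [[a, b], [c, d]]. *)
Definition mat2 := ((R * R) * (R * R))%type.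

Definition jacobian (p q th al : R) : mat2 :=
  ((Derive (fun t => theta_dot p q t al) th, Derive (fun a => theta_dot p q th a) al),
   (Derive (fun t => alpha_dot p q t al) th, Derive (fun a => alpha_dot p q th a) al)).

Definition is_eigenvalue (M : mat2) (l : C) : Prop :=
  match M with
  | ((a, b), (c, d)) =>
      Cminus (Cmult (Cminus (RtoC a) l) (Cminus (RtoC d) l)) (Cmult (RtoC b) (RtoC c)) = RtoC 0
  end.

Definition spiral_sink (M : mat2) : Prop :=
  forall l, is_eigenvalue M l -> Im l <> 0 /\ Re l < 0.
Definition spiral_source (M : mat2) : Prop :=
  forall l, is_eigenvalue M l -> Im l <> 0 /\ 0 < Re l.
Definition nodal_sink (M : mat2) : Prop :=
  forall l, is_eigenvalue M l -> Im l = 0 /\ Re l < 0.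
Definition nodal_source (M : mat2) : Prop :=
  forall l, is_eigenvalue M l -> Im l = 0 /\ 0 < Re l.
Definition saddle (M : mat2) : Prop :=
  exists l1 l2, is_eigenvalue M l1 /\ is_eigenvalue M l2 /\
    Im l1 = 0 /\ Im l2 = 0 /\ Re l1 < 0 < Re l2.

Definition alpha0 (p q : R) : R := atan (sqrt (q / p)).

Definition P0 (p q : R) : R * R := (alpha0 p q, alpha0 p q).
Definition P1 (p q : R) : R * R := (alpha0 p q, alpha0 p q + PI).
Definition Q1 : R * R := (0, PI / 2).
Definition Q2 : R * R := (0, 3 * PI / 2).
Definition Q3 : R * R := (PI / 2, 0).
Definition Q4 : R * R := (PI / 2, PI).

Definition stat_points (p q : R) : list (R * R) := P0 p q :: P1 p q :: Q1 :: Q2 :: Q3 :: Q4 :: nil.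

Definition jac_at (p q : R) (P : R * R) : mat2 := jacobian p q (fst P) (snd P).

(** At a stationary point [θ̇ = 0] forces [sin θ = 0], [cos θ = 0] or
    [sin (α - θ) = 0]; inside the region this means [θ ∈ {0, π/2}] or
    [α - θ ∈ {0, π}], and then [α̇ = 0] pins down [α] (for [α = θ] or
    [α = θ + π] it reads [q cos² θ = p sin² θ], i.e. [tan θ = √(q/p)]).
    With [u = sin α0 cos α0 > 0] and [s = p + q], the Jacobian at [P0] is
    [u [[-3, 3], [-s, -s]]] and at [P1] it is its opposite: the trace is
    [∓(3 + s) u], the determinant [6 s u²] and the discriminant
    [u² (s² - 18 s + 9)], which changes sign between [s = 17] and [s = 18].
    At the four points [Q_i] the Jacobian is triangular with diagonal entries
    of opposite signs. *)

From Stdlib Require Import Reals ZArith List Lra Psatz.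
From Coquelicot Require Import Coquelicot.
Open Scope R_scope.

Definition mtr (M : mat2) : R := let '((a, _), (_, d)) := M in a + d.
Definition mdet (M : mat2) : R := let '((a, b), (c, d)) := M in a * d - b * c.
Definition mdisc (M : mat2) : R := mtr M ^ 2 - 4 * mdet M.

Lemma is_eigenvalueE M x y : is_eigenvalue M (x, y) ->
  x ^ 2 - y ^ 2 - mtr M * x + mdet M = 0 /\ y * (2 * x - mtr M) = 0.
Proof.
destruct M as [[a b] [c d]].
unfold is_eigenvalue, Cminus, Cmult, Cplus, Copp, RtoC; simpl.
intro H; injection H; intros; split; nra.
Qed.

Lemma eigenvalue_disc_neg M x y : mdisc M < 0 -> is_eigenvalue M (x, y) ->
  y <> 0 /\ x = mtr M / 2.
Proof.
unfold mdisc; intros Hdisc Heig.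
destruct (is_eigenvalueE M x y Heig) as [Hre Him].
destruct (Req_dec y 0) as [->|Hy].
- exfalso; pose proof (pow2_ge_0 (2 * x - mtr M)); nra.
- split; [exact Hy|].
  destruct (Rmult_integral _ _ Him); [contradiction | lra].
Qed.

Lemma eigenvalue_disc_pos M x y : 0 < mdisc M -> is_eigenvalue M (x, y) ->
  y = 0 /\ x ^ 2 - mtr M * x + mdet M = 0.
Proof.
unfold mdisc; intros Hdisc Heig.
destruct (is_eigenvalueE M x y Heig) as [Hre Him].
destruct (Req_dec y 0) as [->|Hy].
- split; [reflexivity | nra].
- exfalso; destruct (Rmult_integral _ _ Him) as [|Hx]; [contradiction|].
  assert (x = mtr M / 2) as -> by lra; nra.
Qed.

Lemma spiral_sink_of_disc M : mtr M < 0 -> mdisc M < 0 -> spiral_sink M.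
Proof.
intros Htr Hdisc [x y] Heig; simpl.
destruct (eigenvalue_disc_neg M x y Hdisc Heig); split; [assumption | lra].
Qed.

Lemma spiral_source_of_disc M : 0 < mtr M -> mdisc M < 0 -> spiral_source M.
Proof.
intros Htr Hdisc [x y] Heig; simpl.
destruct (eigenvalue_disc_neg M x y Hdisc Heig); split; [assumption | lra].
Qed.

(* With positive determinant both roots have the sign of the trace. *)
Lemma nodal_sink_of_disc M : mtr M < 0 -> 0 < mdet M -> 0 < mdisc M -> nodal_sink M.
Proof.
intros Htr Hdet Hdisc [x y] Heig; simpl.
destruct (eigenvalue_disc_pos M x y Hdisc Heig); split; [assumption | nra].
Qed.

Lemma nodal_source_of_disc M : 0 < mtr M -> 0 < mdet M -> 0 < mdisc M -> nodal_source M.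
Proof.
intros Htr Hdet Hdisc [x y] Heig; simpl.
destruct (eigenvalue_disc_pos M x y Hdisc Heig); split; [assumption | nra].
Qed.

Lemma saddle_triangular a b c d : b = 0 -> a < 0 < d \/ d < 0 < a -> saddle ((a, b), (c, d)).
Proof.
intros -> Hsigns.
assert (Heig : forall l, l = a \/ l = d -> is_eigenvalue ((a, 0), (c, d)) (RtoC l)).
{ intros l Hl; unfold is_eigenvalue, Cminus, Cmult, Cplus, Copp, RtoC; simpl.
  f_equal; destruct Hl as [->| ->]; ring. }
destruct Hsigns as [Hs|Hs].
- exists (RtoC a), (RtoC d); repeat split; try apply Heig; auto; apply Hs.
- exists (RtoC d), (RtoC a); repeat split; try apply Heig; auto; apply Hs.
Qed.

Lemma jacobian_eq p q th al : jacobian p q th al =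
  ((3 * (cos th * cos th - sin th * sin th) * sin (al - th)
      - 3 * sin th * cos th * cos (al - th),
    3 * sin th * cos th * cos (al - th)),
   (- q * cos al * sin th - p * sin al * cos th,
    - q * sin al * cos th - p * cos al * sin th)).
Proof.
unfold jacobian, theta_dot, alpha_dot.
f_equal; f_equal; apply is_derive_unique; auto_derive; auto; unfold Rminus; ring.
Qed.

Lemma sin_cos_2kPI k : sin (2 * IZR k * PI) = 0 /\ cos (2 * IZR k * PI) = 1.
Proof.
assert (H : sin (IZR k * PI) = 0) by (apply sin_eq_0_1; eauto).
replace (2 * IZR k * PI) with (2 * (IZR k * PI)) by ring.
rewrite sin_2a, cos_2a_sin, H; split; ring.
Qed.

Lemma sin_period_Z x k : sin (x + 2 * IZR k * PI) = sin x.
Proof. rewrite sin_plus; destruct (sin_cos_2kPI k) as [-> ->]; ring. Qed.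

Lemma cos_period_Z x k : cos (x + 2 * IZR k * PI) = cos x.
Proof. rewrite cos_plus; destruct (sin_cos_2kPI k) as [-> ->]; ring. Qed.

Lemma sin_cos_pos x : 0 < x < PI / 2 -> 0 < sin x * cos x.
Proof.
intros Hx; pose proof PI_RGT_0.
apply Rmult_lt_0_compat; [apply sin_gt_0 | apply cos_gt_0]; lra.
Qed.

Lemma sin_eq_0_bounded x : - PI < x <= 2 * PI -> sin x = 0 -> x = 0 \/ x = PI \/ x = 2 * PI.
Proof.
intros Hx Hsin; pose proof PI_RGT_0.
destruct (Rlt_or_le x 0) as [Hneg|Hnneg].
- pose proof (sin_lt_0_var x); lra.
- apply sin_eq_O_2PI_0; lra.
Qed.

Lemma cos_eq_0_bounded x : - (PI / 2) <= x <= 2 * PI -> cos x = 0 ->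
  x = - (PI / 2) \/ x = PI / 2 \/ x = 3 * (PI / 2).
Proof.
intros Hx Hcos; pose proof PI_RGT_0.
destruct (Rlt_or_le x 0) as [Hneg|Hnneg].
- destruct (Req_dec x (- (PI / 2))) as [|Hx']; [now left|].
  pose proof (cos_gt_0 x); lra.
- right; apply cos_eq_0_2PI_0; lra.
Qed.

(* The roots of [s² - 18 s + 9] are [9 ± 6 √2 ≈ 0.51, 17.49]. *)
Lemma threshold_17 s : 1 <= s <= 17 -> s ^ 2 - 18 * s + 9 < 0.
Proof. intros Hs; nra. Qed.

Lemma threshold_18 s : 18 <= s -> 0 < s ^ 2 - 18 * s + 9.
Proof. intros Hs; nra. Qed.

Section Phase_portrait.

Variables p q : R.
Hypothesis p_pos : 0 < p.
Hypothesis q_pos : 0 < q.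

Lemma alpha0_bounds : 0 < alpha0 p q < PI / 2.
Proof.
assert (Hsqrt : 0 < sqrt (q / p)) by (apply sqrt_lt_R0, Rdiv_lt_0_compat; assumption).
unfold alpha0; split.
- rewrite <- atan_0; now apply atan_increasing.
- destruct (atan_bound (sqrt (q / p))); lra.
Qed.

Lemma alpha0_balance :
  q * cos (alpha0 p q) * cos (alpha0 p q) = p * sin (alpha0 p q) * sin (alpha0 p q).
Proof.
pose proof alpha0_bounds as Hbounds; pose proof PI_RGT_0.
assert (Hcos : 0 < cos (alpha0 p q)) by (apply cos_gt_0; lra).
assert (Htan : tan (alpha0 p q) = sqrt (q / p)) by apply tan_atan.
unfold tan in Htan.
assert (Hsin : sin (alpha0 p q) = cos (alpha0 p q) * sqrt (q / p)).
{ rewrite <- Htan; field; lra. }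
rewrite Hsin.
replace (p * (cos (alpha0 p q) * sqrt (q / p)) * (cos (alpha0 p q) * sqrt (q / p)))
  with (p * cos (alpha0 p q) * cos (alpha0 p q) * (sqrt (q / p) * sqrt (q / p))) by ring.
rewrite sqrt_sqrt by (apply Rlt_le, Rdiv_lt_0_compat; assumption).
field; lra.
Qed.

Lemma balance_alpha0 th : 0 <= th <= PI / 2 ->
  q * cos th * cos th = p * sin th * sin th -> th = alpha0 p q.
Proof.
intros Hth Hbal; pose proof PI_RGT_0.
assert (Hth' : 0 < th < PI / 2).
{ split; apply Rnot_ge_lt; intro Hend.
  - replace th with 0 in Hbal by lra; rewrite sin_0, cos_0 in Hbal; lra.
  - replace th with (PI / 2) in Hbal by lra; rewrite sin_PI2, cos_PI2 in Hbal; lra. }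
assert (Hsin : 0 < sin th) by (apply sin_gt_0; lra).
assert (Hcos : 0 < cos th) by (apply cos_gt_0; lra).
assert (Htan : q / p = Rsqr (tan th)) by (unfold Rsqr, tan; field_simplify_eq; lra).
unfold alpha0; rewrite Htan, sqrt_Rsqr.
- rewrite atan_tan; lra.
- unfold tan; apply Rlt_le, Rdiv_lt_0_compat; assumption.
Qed.

Lemma stationary_shift th al k :
  stationary p q th (al + 2 * IZR k * PI) <-> stationary p q th al.
Proof.
unfold stationary, theta_dot, alpha_dot.
replace (al + 2 * IZR k * PI - th) with (al - th + 2 * IZR k * PI) by ring.
now rewrite !sin_period_Z, cos_period_Z.
Qed.

Lemma stat_points_stationary P : In P (stat_points p q) -> stationary p q (fst P) (snd P).
Proof.
pose proof alpha0_balance.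
unfold stat_points, stationary, theta_dot, alpha_dot, P0, P1, Q1, Q2, Q3, Q4; simpl.
intros HP; repeat destruct HP as [<-|HP]; try contradiction; simpl.
- rewrite Rminus_diag, sin_0; split; lra.
- replace (alpha0 p q + PI - alpha0 p q) with PI by ring.
  rewrite sin_PI, neg_cos, neg_sin; split; lra.
- rewrite sin_0, cos_PI2; split; ring.
- replace (3 * PI / 2) with (3 * (PI / 2)) by field.
  rewrite sin_0, cos_3PI2; split; ring.
- rewrite cos_PI2, sin_0; split; ring.
- rewrite cos_PI2, sin_PI; split; ring.
Qed.

Lemma alpha_dot_theta_0 al : - (PI / 2) <= al <= 3 * (PI / 2) -> alpha_dot p q 0 al = 0 ->
  al = - (PI / 2) \/ al = PI / 2 \/ al = 3 * (PI / 2).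
Proof.
unfold alpha_dot; rewrite sin_0, cos_0; intros Hal Hdot; pose proof PI_RGT_0.
apply cos_eq_0_bounded; [lra|].
apply (Rmult_eq_reg_l q); lra.
Qed.

Lemma alpha_dot_theta_PI2 al : 0 <= al <= 2 * PI -> alpha_dot p q (PI / 2) al = 0 ->
  al = 0 \/ al = PI \/ al = 2 * PI.
Proof.
unfold alpha_dot; rewrite sin_PI2, cos_PI2; intros Hal Hdot.
apply sin_eq_O_2PI_0; try lra.
apply (Rmult_eq_reg_l p); lra.
Qed.

Lemma alpha_dot_aligned th al : 0 <= th <= PI / 2 -> - (PI / 2) <= al - th <= 3 * (PI / 2) ->
  sin (al - th) = 0 -> alpha_dot p q th al = 0 ->
  th = alpha0 p q /\ (al = th \/ al = th + PI).
Proof.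
unfold alpha_dot; intros Hth Hdiff Hsin Hdot; pose proof PI_RGT_0.
assert (Hal : al = th \/ al = th + PI).
{ destruct (sin_eq_0_bounded (al - th)) as [|[|]]; lra. }
split; [|exact Hal].
apply balance_alpha0; [exact Hth|].
destruct Hal as [->| ->]; [|rewrite neg_cos, neg_sin in Hdot]; lra.
Qed.

Lemma stationary_listed th al : inR th al -> stationary p q th al ->
  exists k : Z, In (th, al + 2 * IZR k * PI) (stat_points p q).
Proof.
intros HR [Htheta Halpha]; pose proof PI_RGT_0.
assert (Hth : 0 <= th <= PI / 2) by (destruct HR as [[? ?]|[? ?]]; lra).
assert (Hal : th - PI / 2 <= al <= th + 3 * (PI / 2)) by (destruct HR as [[? ?]|[? ?]]; lra).
assert (Hfactors : sin th = 0 \/ cos th = 0 \/ sin (al - th) = 0).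
{ unfold theta_dot in Htheta.
  destruct (Rmult_integral _ _ Htheta) as [H3sc|]; [|auto].
  destruct (Rmult_integral _ _ H3sc) as [H3s|]; [|auto].
  destruct (Rmult_integral _ _ H3s); [lra|auto]. }
unfold stat_points, P0, P1, Q1, Q2, Q3, Q4; simpl.
destruct Hfactors as [Hs|[Hc|Hs]].
- assert (th = 0) as -> by (destruct (sin_eq_0_bounded th) as [|[|]]; lra).
  destruct (alpha_dot_theta_0 al) as [->|[->| ->]]; [lra|assumption|..].
  + exists 1%Z; do 3 right; left; f_equal; lra.
  + exists 0%Z; do 2 right; left; f_equal; lra.
  + exists 0%Z; do 3 right; left; f_equal; lra.
- assert (th = PI / 2) as ->.
  { destruct (cos_eq_0_bounded th) as [|[|]]; lra. }
  destruct (alpha_dot_theta_PI2 al) as [->|[->| ->]]; [lra|assumption|..].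
  + exists 0%Z; do 4 right; left; f_equal; lra.
  + exists 0%Z; do 5 right; left; f_equal; lra.
  + exists (-1)%Z; do 4 right; left; f_equal; lra.
- destruct (alpha_dot_aligned th al) as [-> [->| ->]]; try assumption; try lra.
  + exists 0%Z; left; f_equal; lra.
  + exists 0%Z; right; left; f_equal; lra.
Qed.

Lemma stat_points_in_R P : In P (stat_points p q) -> inR (fst P) (snd P).
Proof.
pose proof alpha0_bounds; pose proof PI_RGT_0.
unfold stat_points, inR, inR1, inR2, P0, P1, Q1, Q2, Q3, Q4; simpl.
intros HP; repeat destruct HP as [<-|HP]; try contradiction; simpl;
  [left | right | left | right | left | left]; lra.
Qed.

Lemma stationary_iff_listed th al : inR th al ->
  (stationary p q th al <-> exists k : Z, In (th, al + 2 * IZR k * PI) (stat_points p q)).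
Proof.
intros HR; split; [now apply stationary_listed|].
intros [k Hk]; apply (stationary_shift th al k), (stat_points_stationary _ Hk).
Qed.

Let u := sin (alpha0 p q) * cos (alpha0 p q).

Lemma jac_at_P0 : jac_at p q (P0 p q) = ((- 3 * u, 3 * u), (- (p + q) * u, - (p + q) * u)).
Proof.
unfold jac_at, P0, u; simpl; rewrite jacobian_eq, Rminus_diag, sin_0, cos_0.
f_equal; f_equal; ring.
Qed.

Lemma jac_at_P1 : jac_at p q (P1 p q) = ((3 * u, - 3 * u), ((p + q) * u, (p + q) * u)).
Proof.
unfold jac_at, P1, u; simpl; rewrite jacobian_eq.
replace (alpha0 p q + PI - alpha0 p q) with PI by ring.
rewrite sin_PI, cos_PI, neg_cos, neg_sin.
f_equal; f_equal; ring.
Qed.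

Lemma sin_cos_alpha0_pos : 0 < u.
Proof. exact (sin_cos_pos _ alpha0_bounds). Qed.

Lemma mdisc_jac_P0 : mdisc (jac_at p q (P0 p q)) = u ^ 2 * ((p + q) ^ 2 - 18 * (p + q) + 9).
Proof. rewrite jac_at_P0; unfold mdisc, mtr, mdet; ring. Qed.

Lemma mdisc_jac_P1 : mdisc (jac_at p q (P1 p q)) = u ^ 2 * ((p + q) ^ 2 - 18 * (p + q) + 9).
Proof. rewrite jac_at_P1; unfold mdisc, mtr, mdet; ring. Qed.

Lemma sin_cos_alpha0_sqr_pos : 0 < u ^ 2.
Proof. exact (pow_lt _ 2 sin_cos_alpha0_pos). Qed.

Lemma P0_spiral_sink : 1 <= p + q <= 17 -> spiral_sink (jac_at p q (P0 p q)).
Proof.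
intros Hs; pose proof (threshold_17 _ Hs).
pose proof sin_cos_alpha0_pos; pose proof sin_cos_alpha0_sqr_pos.
apply spiral_sink_of_disc; [rewrite jac_at_P0; simpl | rewrite mdisc_jac_P0]; nra.
Qed.

Lemma P0_nodal_sink : 18 <= p + q -> nodal_sink (jac_at p q (P0 p q)).
Proof.
intros Hs; pose proof (threshold_18 _ Hs).
pose proof sin_cos_alpha0_pos; pose proof sin_cos_alpha0_sqr_pos.
apply nodal_sink_of_disc; [rewrite jac_at_P0; simpl.. | rewrite mdisc_jac_P0]; nra.
Qed.

Lemma P1_spiral_source : 1 <= p + q <= 17 -> spiral_source (jac_at p q (P1 p q)).
Proof.
intros Hs; pose proof (threshold_17 _ Hs).
pose proof sin_cos_alpha0_pos; pose proof sin_cos_alpha0_sqr_pos.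
apply spiral_source_of_disc; [rewrite jac_at_P1; simpl | rewrite mdisc_jac_P1]; nra.
Qed.

Lemma P1_nodal_source : 18 <= p + q -> nodal_source (jac_at p q (P1 p q)).
Proof.
intros Hs; pose proof (threshold_18 _ Hs).
pose proof sin_cos_alpha0_pos; pose proof sin_cos_alpha0_sqr_pos.
apply nodal_source_of_disc; [rewrite jac_at_P1; simpl.. | rewrite mdisc_jac_P1]; nra.
Qed.

Lemma Q1_saddle : saddle (jac_at p q Q1).
Proof.
unfold jac_at, Q1; simpl; rewrite jacobian_eq, Rminus_0_r, sin_0, cos_0, sin_PI2, cos_PI2.
apply saddle_triangular; [ring | lra].
Qed.

Lemma Q2_saddle : saddle (jac_at p q Q2).
Proof.
unfold jac_at, Q2; simpl; rewrite jacobian_eq, Rminus_0_r.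
replace (3 * PI / 2) with (3 * (PI / 2)) by field.
rewrite sin_0, cos_0, sin_3PI2, cos_3PI2.
apply saddle_triangular; [ring | lra].
Qed.

Lemma Q3_saddle : saddle (jac_at p q Q3).
Proof.
unfold jac_at, Q3; simpl; rewrite jacobian_eq, Rminus_0_l.
rewrite sin_neg, sin_0, cos_0, sin_PI2, cos_PI2.
apply saddle_triangular; [ring | lra].
Qed.

Lemma Q4_saddle : saddle (jac_at p q Q4).
Proof.
unfold jac_at, Q4; simpl; rewrite jacobian_eq.
replace (PI - PI / 2) with (PI / 2) by field.
rewrite sin_PI, cos_PI, sin_PI2, cos_PI2.
apply saddle_triangular; [ring | lra].
Qed.

End Phase_portrait.

Theorem lemma4p6 (p q : nat) (hp : (1 <= p)%nat) (hq : (1 <= q)%nat) :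
  let pr := INR p in let qr := INR q in
  (forall P, In P (stat_points pr qr) -> inR (fst P) (snd P)) /\
  (forall th al, inR th al ->
     (stationary pr qr th al <->
      exists k : Z, In (th, al + 2 * IZR k * PI) (stat_points pr qr))) /\
  ((p + q <= 17)%nat -> spiral_sink (jac_at pr qr (P0 pr qr))) /\
  ((18 <= p + q)%nat -> nodal_sink (jac_at pr qr (P0 pr qr))) /\
  ((p + q <= 17)%nat -> spiral_source (jac_at pr qr (P1 pr qr))) /\
  ((18 <= p + q)%nat -> nodal_source (jac_at pr qr (P1 pr qr))) /\
  saddle (jac_at pr qr Q1) /\ saddle (jac_at pr qr Q2) /\
  saddle (jac_at pr qr Q3) /\ saddle (jac_at pr qr Q4).
Proof.
intros pr qr.
assert (Hp : 1 <= pr) by exact (le_INR 1 p hp).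
assert (Hq : 1 <= qr) by exact (le_INR 1 q hq).
assert (Hp0 : 0 < pr) by lra; assert (Hq0 : 0 < qr) by lra.
assert (Hspiral : (p + q <= 17)%nat -> 1 <= pr + qr <= 17).
{ intros H; apply le_INR in H; rewrite plus_INR in H; simpl in H; fold pr qr in H; lra. }
assert (Hnodal : (18 <= p + q)%nat -> 18 <= pr + qr).
{ intros H; apply le_INR in H; rewrite plus_INR in H; simpl in H; fold pr qr in H; lra. }
split; [exact (stat_points_in_R _ _ Hp0 Hq0)|].
split; [exact (stationary_iff_listed _ _ Hp0 Hq0)|].
split; [intros; apply P0_spiral_sink; auto|].
split; [intros; apply P0_nodal_sink; auto|].
split; [intros; apply P1_spiral_source; auto|].
split; [intros; apply P1_nodal_source; auto|].
split; [now apply Q1_saddle|]. split; [now apply Q2_saddle|].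
split; [now apply Q3_saddle | now apply Q4_saddle].
Qed.
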